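(* The class of trapezoid graphs, and the class of permutation graphs, each contain a graph that is not a pairwise compatibility graph; i.e., neither class is contained in PCG.
   Context: All graphs are finite and simple. A graph $G=(V,E)$ is a pairwise compatibility graph (PCG) if there exist a tree $T$ with non-negative real edge weights, whose set of leaves is exactly $V$, and two non-negative real numbers $d_{min}\le d_{max}$ such that for all distinct $u,v\in V$, $(u,v)\in E$ if and only if $d_{min}\le d_T(u,v)\le d_{max}$, where $d_T(u,v)$ is the sum of the weights of the edges on the unique path from $u$ to $v$ in $T$. A trapezoid graph is the intersection graph of a family of trapezoids lying between two fixed parallel lines (each trapezoid having one side on each line). A permutation graph is the intersection graph of a family of straight line segments each joining a point of one fixed line to a point of a second fixed parallel line. *)

From HB Require Import structures.
From mathcomp Require Import all_boot all_order all_algebra.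
From mathcomp Require Import Rstruct.
From Stdlib Require Import Rdefinitions.
Set Implicit Arguments.
Unset Strict Implicit.
Unset Printing Implicit Defensive.
Import Order.TTheory GRing.Theory Num.Theory.
Local Open Scope ring_scope.

Definition simple_graph (V : finType) (E : rel V) : Prop :=
  irreflexive E /\ symmetric E.

Definition simple_path (U : finType) (t : rel U) (x : U) (p : seq U) (y : U) : bool :=
  [&& path t x p, last x p == y & uniq (x :: p)].

(* A tree: a simple graph in which any two vertices are joined by exactly one
   simple path (equivalently: connected and acyclic). *)
Definition is_tree (U : finType) (t : rel U) : Prop :=
  simple_graph t /\ forall x y : U, exists! p : seq U, simple_path t x p y.

(* Leaf of a tree: vertex of degree at most 1 (degree 0 only occurs in the
   one-vertex tree, whose unique vertex is a leaf). *)
Definition is_leaf (U : finType) (t : rel U) (x : U) : bool :=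
  leq #|[set y | t x y]| 1.

Fixpoint path_weight (U : Type) (w : U -> U -> R) (x : U) (p : seq U) : R :=
  match p with
  | [::] => 0
  | y :: p' => w x y + path_weight w y p'
  end.

(* G = (V, E) is a PCG if there is an edge-weighted tree (vertex type U, edge
   relation t, non-negative symmetric weights w) whose leaves are exactly the
   vertices of V (identified via the injection f : V -> U whose image is the set
   of leaves), and reals 0 <= dmin <= dmax such that for distinct u, v,
   uv is an edge iff dmin <= d_T(u, v) <= dmax, where d_T(u, v) is the weight of
   the (unique) simple path from f u to f v. *)
Definition PCG (V : finType) (E : rel V) : Prop :=
  exists (U : finType) (t : rel U) (w : U -> U -> R) (f : V -> U) (dmin dmax : R),
    [/\ is_tree t,
        (forall x y, 0 <= w x y) /\ (forall x y, w x y = w y x),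
        injective f /\ (forall x : U, (exists v, f v = x) <-> is_leaf t x),
        0 <= dmin /\ dmin <= dmax &
        forall u v : V, u != v -> forall p : seq U, simple_path t (f u) p (f v) ->
          (E u v <-> (dmin <= path_weight w (f u) p /\ path_weight w (f u) p <= dmax))].

(* Two parallel lines y = 1 (top) and y = 0 (bottom).  The trapezoid with top
   side [a, b] x {1} and bottom side [c, d] x {0} (a < b, c < d) is the set of
   points (x, s), 0 <= s <= 1, with s*a + (1-s)*c <= x <= s*b + (1-s)*d. *)
Definition in_trapezoid (a b c d : R) (x s : R) : Prop :=
  0 <= s /\ s <= 1 /\
  s * a + (1 - s) * c <= x /\ x <= s * b + (1 - s) * d.

Definition trapezoid_graph (V : finType) (E : rel V) : Prop :=
  exists a b c d : V -> R,
    (forall v, a v < b v /\ c v < d v) /\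
    forall u v : V, u != v ->
      (E u v <-> exists x s : R,
         in_trapezoid (a u) (b u) (c u) (d u) x s /\
         in_trapezoid (a v) (b v) (c v) (d v) x s).

(* Segment joining (p v, 1) to (q v, 0): the points (s*p v + (1-s)*q v, s),
   0 <= s <= 1.  Edges = pairs of distinct intersecting segments. *)
Definition in_segment (p q : R) (x s : R) : Prop :=
  0 <= s /\ s <= 1 /\ x = s * p + (1 - s) * q.

Definition permutation_graph (V : finType) (E : rel V) : Prop :=
  exists p q : V -> R,
    forall u v : V, u != v ->
      (E u v <-> exists x s : R,
         in_segment (p u) (q u) x s /\ in_segment (p v) (q v) x s).

(* Path lengths [d] in an edge-weighted tree satisfy the four-point condition: the sum
   d(u,v) + d(x,y) never exceeds both d(u,x) + d(v,y) and d(u,y) + d(v,x).  In a PCG with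
   window [dmin, dmax], an induced 2K2 with edges uv, xy therefore has a non-edge longer than
   dmax (if all four non-edges were shorter than dmin, d(u,v) + d(x,y) >= 2 dmin would exceed
   both sums).  Two such long pairs taken from two completely joined copies of 2K2 contradict
   the four-point condition once more, because the four joining edges have length at most dmax.
   The join of two copies of 2K2 is the inversion graph of a permutation, hence a permutation
   graph; as its segments have integer endpoints, thickening them into trapezoids of width 1/2
   creates no new intersections. *)

From Stdlib Require Import Rdefinitions.
From mathcomp Require Import all_boot all_order all_algebra.
From mathcomp Require Import Rstruct ring lra.
Set Implicit Arguments.
Unset Strict Implicit.
Unset Printing Implicit Defensive.
Import Order.TTheory GRing.Theory Num.Theory.
Local Open Scope ring_scope.

Section LongestCommonPrefix.
Variable T : eqType.

Fixpoint lcp (p q : seq T) : nat :=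
  match p, q with
  | x :: p', y :: q' => if x == y then (lcp p' q').+1 else 0%N
  | _, _ => 0%N
  end.

Lemma lcp_take p q : take (lcp p q) p = take (lcp p q) q.
Proof.
by elim: p q => [|x p IHp] [|y q] //=; case: eqP => [->|] //=; rewrite IHp.
Qed.

Lemma lcp_max p q n : (n <= size p)%N -> take n p = take n q -> (n <= lcp p q)%N.
Proof.
elim: p q n => [|x p IHp] [|y q] [|n] //= n_le [-> eq_pq].
by rewrite eqxx ltnS; exact: IHp.
Qed.

Lemma lcp_ultra p q r : (minn (lcp p r) (lcp p q) <= lcp q r)%N.
Proof.
elim: p q r => [|x p IHp] [|y q] [|z r] //=; rewrite ?minn0 ?min0n //.
have [-> {x}|_] := eqVneq x z; have [_|_] := eqVneq z y;
  rewrite /= ?minn0 ?min0n //.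
by rewrite minnSS ltnS.
Qed.

End LongestCommonPrefix.

Section PathWeight.
Variables (U : Type) (w : U -> U -> R).
Hypothesis w_ge0 : forall x y, 0 <= w x y.
Hypothesis w_sym : forall x y, w x y = w y x.
Local Notation W := (path_weight w).

(* [path_weight] is computed with Stdlib's [Rplus]; restate it with the ring operations. *)
Lemma path_weight_nil a : W a [::] = 0.
Proof. by []. Qed.

Lemma path_weight_cons a y p : W a (y :: p) = w a y + W y p.
Proof. by []. Qed.

Lemma path_weight_cat a p q : W a (p ++ q) = W a p + W (last a p) q.
Proof.
elim: p a => [|y p IHp] a; first by rewrite path_weight_nil add0r.
by rewrite cat_cons !path_weight_cons IHp addrA.
Qed.

Lemma path_weight_ge0 a p : 0 <= W a p.
Proof.
by elim: p a => [|y p IHp] a; rewrite ?path_weight_nil ?path_weight_cons ?addr_ge0.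
Qed.

Lemma path_weight_take_mono a p m n :
  (m <= n)%N -> W a (take m p) <= W a (take n p).
Proof.
move=> le_mn; rewrite -(subnKC le_mn) takeD path_weight_cat lerDl.
exact: path_weight_ge0.
Qed.

Lemma last_rev_belast (x : U) p : last (last x p) (rev (belast x p)) = x.
Proof. by elim: p x => [|y p IHp] x //=; rewrite rev_cons last_rcons. Qed.

Lemma path_weight_rev x p : W (last x p) (rev (belast x p)) = W x p.
Proof.
elim: p x => [|y p IHp] x //=.
rewrite rev_cons -cats1 path_weight_cat IHp last_rev_belast.
by rewrite !path_weight_cons path_weight_nil addr0 addrC w_sym.
Qed.

End PathWeight.

Section SimplePaths.
Variables (U : finType) (t : rel U).

Lemma simple_path_take a p b i : simple_path t a p b -> (i < size p)%N ->
  simple_path t a (take i.+1 p) (nth a p i).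
Proof.
move=> /and3P[tp _ up] lt_ip; apply/and3P; split.
- exact: take_path.
- by rewrite -nth_last size_takel // nth_take.
- exact: (take_uniq i.+2 up).
Qed.

Lemma simple_path_drop a p b k : simple_path t a p b ->
  simple_path t (last a (take k p)) (drop k p) b.
Proof.
case/and3P; rewrite -{1 2 3}(cat_take_drop k p) cat_path last_cat.
move=> /andP[_ tp] /eqP <-; rewrite -cat_cons cat_uniq => /and3P[_ take_drop up].
rewrite /simple_path tp eqxx /= up andbT; apply: contra take_drop => in_drop.
by apply/hasP; exists (last a (take k p)) => //; exact: mem_last.
Qed.

Hypothesis t_sym : symmetric t.

Lemma simple_path_rev a p b : simple_path t a p b ->
  simple_path t b (rev (belast a p)) a.
Proof.
case/and3P=> tp /eqP <- up; apply/and3P; split.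
- by rewrite rev_path (@eq_path _ _ t) // => x y; rewrite t_sym.
- by rewrite last_rev_belast.
- by rewrite -rev_rcons -lastI rev_uniq.
Qed.

Lemma simple_path_cat_rev c p b q e :
  simple_path t c p b -> simple_path t c q e -> [disjoint p & q] ->
  simple_path t b (rev (belast c p) ++ q) e.
Proof.
move=> sp sq dis_pq; have /and3P[tr /eqP lr ur] := simple_path_rev sp.
case/and3P: sp => _ /eqP lp _; case/and3P: sq => tq /eqP lq /= /andP[cq uq].
apply/and3P; split.
- by rewrite cat_path tr lr.
- by rewrite last_cat lr lq.
- rewrite -cat_cons cat_uniq ur uq andbT -lp -rev_rcons -lastI.
  apply/hasPn => v qv; rewrite mem_rev in_cons negb_or; apply/andP; split.
  + by apply: contraNneq cq => <-.
  + by rewrite (disjointFl dis_pq qv).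
Qed.

End SimplePaths.

Section TreePaths.
Variables (U : finType) (t : rel U).
Hypothesis t_tree : is_tree t.

Lemma simple_path_unique a p q b :
  simple_path t a p b -> simple_path t a q b -> p = q.
Proof.
move=> sp sq; have [p0 [_ uniq_path]] := t_tree.2 a b.
by rewrite -(uniq_path p sp) -(uniq_path q sq).
Qed.

Lemma lcp_drop_disjoint a p b q c :
  simple_path t a p b -> simple_path t a q c ->
  [disjoint drop (lcp p q) p & drop (lcp p q) q].
Proof.
move=> sp sq; set k := lcp p q.
have index_drop s e v : simple_path t a s e -> v \in drop k s -> (k <= index v s)%N.
  case/and3P=> _ _ /= /andP[_ us] vs; move: us.
  rewrite -[in uniq _](cat_take_drop k s) cat_uniq => /and3P[_ /hasPn/(_ v vs)].
  by rewrite (in_take _ (mem_drop vs)) -leqNgt.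
rewrite disjoint_subset; apply/subsetP => v vp; rewrite inE; apply/negP => vq.
have [vp' vq'] := (mem_drop vp, mem_drop vq).
have := simple_path_take sp (_ : index v p < size p)%N; rewrite index_mem nth_index //.
have := simple_path_take sq (_ : index v q < size q)%N; rewrite index_mem nth_index //.
move=> /(_ vq') sq' /(_ vp') /simple_path_unique/(_ sq') eq_take.
have eq_index : index v p = index v q.
  by have := congr1 size eq_take; rewrite !size_takel ?index_mem //; case.
rewrite -eq_index in eq_take.
have := lcp_max (_ : index v p < size p)%N eq_take; rewrite index_mem -/k => /(_ vp').
by rewrite ltnNge (index_drop _ _ _ sp vp).
Qed.

Variable w : U -> U -> R.
Hypothesis w_ge0 : forall x y, 0 <= w x y.
Hypothesis w_sym : forall x y, w x y = w y x.
Local Notation W := (path_weight w).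

(* The paths from [a] to [b] and to [c] share the prefix up to the branch point, after which
   they are disjoint and glue into the path from [b] to [c]. *)
Lemma tree_tripod_weight a b c p q r :
  simple_path t a p b -> simple_path t a q c -> simple_path t b r c ->
  W a p + W a q = W b r + 2 * W a (take (lcp p q) p).
Proof.
move=> sp sq sr; set k := lcp p q; set o := last a (take k p).
have take_qp : take k q = take k p by rewrite /k lcp_take.
have sp' : simple_path t o (drop k p) b := simple_path_drop k sp.
have sq' : simple_path t o (drop k q) c by rewrite /o -take_qp; exact: simple_path_drop.
have sr' := simple_path_cat_rev t_tree.1.2 sp' sq' (lcp_drop_disjoint sp sq).
rewrite (simple_path_unique sr sr') path_weight_cat.
case/and3P: sp' => _ /eqP lp _; rewrite -{1 2}lp last_rev_belast path_weight_rev //.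
rewrite -[in W a p](cat_take_drop k p) -[in W a q](cat_take_drop k q) take_qp.
rewrite !path_weight_cat -/o; lra.
Qed.

Lemma tree_four_point a b c e pab pac pae pbc pbe pce :
  simple_path t a pab b -> simple_path t a pac c -> simple_path t a pae e ->
  simple_path t b pbc c -> simple_path t b pbe e -> simple_path t c pce e ->
  W a pab + W c pce <= W a pac + W b pbe \/
  W a pab + W c pce <= W a pae + W b pbc.
Proof.
move=> sab sac sae sbc sbe sce.
have D1 := tree_tripod_weight sab sac sbc.
have D2 := tree_tripod_weight sab sae sbe.
have D3 := tree_tripod_weight sac sae sce.
have U3 := lcp_ultra pab pac pae.
set m1 := lcp pab pae in D2 U3; set m2 := lcp pab pac in D1 U3.
set k := lcp pac pae in D3 U3.
have [le_m12|lt_m21] := leqP m1 m2.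
- left.
  have E1 : take m1 pab = take m1 pac.
    by rewrite -(take_takel pab le_m12) /m2 lcp_take take_takel.
  have : W a (take m1 pab) <= W a (take k pac).
    rewrite E1; apply: path_weight_take_mono => //.
    by move: U3; rewrite (minn_idPl le_m12).
  lra.
- right; have le_m21 := ltnW lt_m21.
  have E1 : take m2 pab = take m2 pae.
    by rewrite -(take_takel pab le_m21) /m1 lcp_take take_takel.
  have : W a (take m2 pab) <= W a (take k pac).
    rewrite E1 /k lcp_take; apply: path_weight_take_mono => //.
    by move: U3; rewrite (minn_idPr le_m21).
  lra.
Qed.

End TreePaths.

Definition four_point_condition (V : Type) (d : V -> V -> R) : Prop :=
  forall u v x y, d u v + d x y <= d u x + d v y \/ d u v + d x y <= d u y + d v x.

Lemma PCG_four_point (V : finType) (E : rel V) : PCG E ->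
  exists (d : V -> V -> R) (dmin dmax : R), four_point_condition d /\
    forall u v, u != v -> E u v = (dmin <= d u v <= dmax).
Proof.
move=> [U [t [w [f [dmin [dmax [t_tree [w_ge0 w_sym] _ _ E_window]]]]]]].
have path_ex u v : exists p, simple_path t (f u) p (f v).
  by have [p [sp _]] := t_tree.2 (f u) (f v); exists p.
pose P u v := xchoose (path_ex u v).
have sP u v : simple_path t (f u) (P u v) (f v) := xchooseP (path_ex u v).
exists (fun u v => path_weight w (f u) (P u v)), dmin, dmax; split.
- move=> u v x y /=; exact: (tree_four_point t_tree w_ge0 w_sym
    (sP u v) (sP u x) (sP u y) (sP v x) (sP v y) (sP x y)).
- move=> u v neq_uv; have [to_window of_window] := E_window u v neq_uv _ (sP u v).
  by apply/idP/andP.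
Qed.

Section FourPointWindow.
Variables (V : eqType) (E : rel V).

Definition induced_2K2 (u v x y : V) : bool :=
  uniq [:: u; v; x; y] && [&& E u v, E x y, ~~ E u x, ~~ E u y, ~~ E v x & ~~ E v y].

Variables (d : V -> V -> R) (dmin dmax : R).
Hypothesis E_irr : irreflexive E.
Hypothesis d_four_point : four_point_condition d.
Hypothesis E_window : forall u v, u != v -> E u v = (dmin <= d u v <= dmax).

Lemma edge_window u v : E u v -> dmin <= d u v <= dmax.
Proof.
by move=> Euv; rewrite -E_window //; apply: contraTneq Euv => ->; rewrite E_irr.
Qed.

Lemma nonedge_window u v : u != v -> ~~ E u v -> d u v < dmin \/ dmax < d u v.
Proof.
move=> neq_uv; rewrite E_window // negb_and -!ltNge.
by case/orP; [left | right].
Qed.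

Lemma induced_2K2_far u v x y : induced_2K2 u v x y ->
  dmax < d u x \/ dmax < d v y \/ dmax < d u y \/ dmax < d v x.
Proof.
rewrite /induced_2K2 /= !inE !negb_or -!andbA.
case/and5P => _ nux nuy nvx /and5P[nvy _ _ Euv /and5P[Exy Nux Nuy Nvx Nvy]].
move: (edge_window Euv) (edge_window Exy) => /andP[duv _] /andP[dxy _].
case: (nonedge_window nux Nux) => [dux|]; last by left.
case: (nonedge_window nvy Nvy) => [dvy|]; last by right; left.
case: (nonedge_window nuy Nuy) => [duy|]; last by right; right; left.
case: (nonedge_window nvx Nvx) => [dvx|]; last by right; right; right.
by case: (d_four_point u v x y); lra.
Qed.

Lemma far_pairs_not_joined a a' b b' : dmax < d a a' -> dmax < d b b' ->
  E a b -> E a' b' -> E a b' -> E a' b -> False.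
Proof.
move=> daa dbb /edge_window/andP[_ dab] /edge_window/andP[_ dab'].
move=> /edge_window/andP[_ dab''] /edge_window/andP[_ dab'''].
by case: (d_four_point a a' b b'); lra.
Qed.

End FourPointWindow.

Lemma joined_2K2_not_PCG (V : finType) (E : rel V) u v x y u' v' x' y' :
  irreflexive E -> induced_2K2 E u v x y -> induced_2K2 E u' v' x' y' ->
  {in [:: u; v; x; y] & [:: u'; v'; x'; y'], forall i j, E i j} -> ~ PCG E.
Proof.
move=> E_irr K K' joined /PCG_four_point[d [dmin [dmax [d4 E_window]]]].
have far := induced_2K2_far E_irr d4 E_window K.
have far' := induced_2K2_far E_irr d4 E_window K'.
by case: far => [f|[f|[f|f]]]; case: far' => [f'|[f'|[f'|f']]];
  apply: (far_pairs_not_joined E_irr d4 E_window f f'); apply: joined; rewrite !inE eqxx ?orbT.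
Qed.

Lemma convex_comb_ge1 (a b s : R) : 1 <= a -> 1 <= b -> 0 <= s <= 1 ->
  1 <= s * a + (1 - s) * b.
Proof.
move=> a_ge1 b_ge1 /andP[s_ge0 s_le1].
have : 0 <= s * (a - 1) by rewrite mulr_ge0 ?subr_ge0.
have : 0 <= (1 - s) * (b - 1) by rewrite mulr_ge0 ?subr_ge0.
lra.
Qed.

Lemma convex_comb_root (a b : R) : a * b < 0 ->
  exists s, 0 <= s <= 1 /\ s * a + (1 - s) * b = 0.
Proof.
move=> ab_lt0; have [a_lt0|a_ge0] := ltrP a 0.
- have b_gt0 : 0 < b by rewrite -(nmulr_rlt0 _ a_lt0).
  have ba_gt0 : 0 < b - a by lra.
  exists (b / (b - a)); split; last by field; exact: lt0r_neq0.
  by apply/andP; split; [apply: divr_ge0 | rewrite ler_pdivrMr ?mul1r]; lra.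
- have a_gt0 : 0 < a.
    by rewrite lt0r a_ge0 andbT; apply: contraTneq ab_lt0 => ->; rewrite mul0r ltxx.
  have b_lt0 : b < 0 by rewrite -(pmulr_rlt0 _ a_gt0).
  have ab_gt0 : 0 < a - b by lra.
  exists (b / (b - a)); split; last by field; rewrite -opprB oppr_eq0 lt0r_neq0.
  rewrite -divrNN opprB.
  by apply/andP; split; [apply: divr_ge0 | rewrite ler_pdivrMr ?mul1r]; lra.
Qed.

Lemma convex_comb_near0_iff (a b e : R) : 0 <= e < 1 -> 1 <= `|a| -> 1 <= `|b| ->
  (exists s, 0 <= s <= 1 /\ `|s * a + (1 - s) * b| <= e) <-> a * b < 0.
Proof.
move=> /andP[e_ge0 e_lt1] a_ge1 b_ge1; split; last first.
  by case/convex_comb_root=> s [s01 root_s]; exists s; rewrite root_s normr0.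
case=> s [s01 /ler_normlP[lo hi]]; rewrite ltNge; apply/negP => ab_ge0.
have [a_lt0|a_ge0] := ltrP a 0.
- have b_le0 : b <= 0 by rewrite -(nmulr_rge0 _ a_lt0).
  rewrite ltr0_norm // in a_ge1; rewrite ler0_norm // in b_ge1.
  by have := convex_comb_ge1 a_ge1 b_ge1 s01; lra.
- have a_gt0 : 0 < a by rewrite (lt_le_trans ltr01) // -(ger0_norm a_ge0).
  have b_ge0 : 0 <= b by rewrite -(pmulr_rge0 _ a_gt0).
  rewrite ger0_norm // in a_ge1; rewrite ger0_norm // in b_ge1.
  by have := convex_comb_ge1 a_ge1 b_ge1 s01; lra.
Qed.

Lemma nat_dist_ge1 (m n : nat) : m != n -> 1 <= `|m%:R - n%:R : R|.
Proof.
rewrite ler_normr opprB; case: ltngtP => // [lt_mn|lt_nm] _; apply/orP.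
- by right; rewrite lerBrDr addrC natr1 ler_nat.
- by left; rewrite lerBrDr addrC natr1 ler_nat.
Qed.

Lemma convex_comb_nat_near0_iff (m n m' n' : nat) (e : R) :
  0 <= e < 1 -> m != n -> m' != n' ->
  (exists s, 0 <= s <= 1 /\ `|s * (m%:R - n%:R) + (1 - s) * (m'%:R - n'%:R)| <= e) <->
  (m < n)%N (+) (m' < n')%N.
Proof.
move=> e01 neq_mn neq_mn'.
rewrite convex_comb_near0_iff ?nat_dist_ge1 // neq0_mulr_lt0 ?subr_lt0 ?ltr_nat //.
all: by rewrite subr_eq0 eqr_nat.
Qed.

Lemma segments_meet_iff (pu qu pv qv : R) :
  (exists x s, in_segment pu qu x s /\ in_segment pv qv x s) <->
  exists s, 0 <= s <= 1 /\ `|s * (pu - pv) + (1 - s) * (qu - qv)| <= 0.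
Proof.
have diff s : s * (pu - pv) + (1 - s) * (qu - qv) =
    (s * pu + (1 - s) * qu) - (s * pv + (1 - s) * qv) by ring.
split=> [[x [s [[s_ge0 [s_le1 xu]] [_ [_ xv]]]]] | [s [/andP[s_ge0 s_le1]]]].
- by exists s; rewrite s_ge0 s_le1 diff -xu -xv subrr normr0.
- rewrite normr_le0 diff subr_eq0 => /eqP uv.
  by exists (s * pu + (1 - s) * qu), s.
Qed.

Lemma trapezoids_meet_iff (pu qu pv qv h : R) :
  (exists x s, in_trapezoid pu (pu + h) qu (qu + h) x s /\
               in_trapezoid pv (pv + h) qv (qv + h) x s) <->
  exists s, 0 <= s <= 1 /\ `|s * (pu - pv) + (1 - s) * (qu - qv)| <= h.
Proof.
have diff s : s * (pu - pv) + (1 - s) * (qu - qv) =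
    (s * pu + (1 - s) * qu) - (s * pv + (1 - s) * qv) by ring.
have shift s p q : s * (p + h) + (1 - s) * (q + h) = (s * p + (1 - s) * q) + h by ring.
split=> [[x [s [[s_ge0 [s_le1 xu]] [_ [_ xv]]]]] | [s [/andP[s_ge0 s_le1]]]].
- exists s; split; first by rewrite s_ge0 s_le1.
  by rewrite diff; rewrite !shift in xu xv; apply/ler_normlP; split; lra.
- rewrite diff => /ler_normlP[lo hi].
  set Lu := s * pu + (1 - s) * qu in lo hi *; set Lv := s * pv + (1 - s) * qv in lo hi *.
  exists (Num.max Lu Lv), s; rewrite /in_trapezoid !shift -/Lu -/Lv.
  by have [|] := leP Lu Lv; do !split => //; lra.
Qed.

Section InversionGraphs.
Variables (V : finType) (E : rel V) (p q : V -> nat).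
Hypotheses (p_inj : injective p) (q_inj : injective q).
Hypothesis E_inversions : forall u v, u != v -> E u v = (p u < p v)%N (+) (q u < q v)%N.

Lemma permutation_graph_inversions : permutation_graph E.
Proof.
exists (fun u => (p u)%:R), (fun u => (q u)%:R) => u v neq_uv.
rewrite segments_meet_iff convex_comb_nat_near0_iff ?lexx ?ltr01 ?inj_eq //.
by rewrite E_inversions.
Qed.

Lemma trapezoid_graph_inversions : trapezoid_graph E.
Proof.
exists (fun u => (p u)%:R), (fun u => (p u)%:R + 2^-1),
       (fun u => (q u)%:R), (fun u => (q u)%:R + 2^-1); split.
  by move=> v; rewrite !ltrDl invr_gt0 ltr0n.
move=> u v neq_uv; rewrite trapezoids_meet_iff convex_comb_nat_near0_iff ?inj_eq //.
- by rewrite E_inversions.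
- by rewrite invr_ge0 ler0n invf_lt1 ?ltr0n ?ltr1n.
Qed.

End InversionGraphs.

(* Vertices [2k] and [2k+1] are adjacent, and each of [0..3] is adjacent to each of [4..7]:
   the join of two copies of 2K2. *)
Definition twoK2_join : rel 'I_8 :=
  fun i j => (i != j) && (((i < 4)%N != (j < 4)%N) || (i./2 == j./2)).

Ltac case_I8 i := case: i => [[|[|[|[|[|[|[|[|//]]]]]]]] ?].

Definition twoK2_join_perm (i : 'I_8) : nat := nth 0%N [:: 5; 4; 7; 6; 1; 0; 3; 2]%N i.

Lemma twoK2_join_perm_inj : injective twoK2_join_perm.
Proof.
move=> i j /eqP; apply: contraTeq.
by case_I8 i; case_I8 j.
Qed.

Lemma twoK2_join_inversions (i j : 'I_8) : i != j ->
  twoK2_join i j = (i < j)%N (+) (twoK2_join_perm i < twoK2_join_perm j)%N.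
Proof. by case_I8 i; case_I8 j. Qed.

Lemma twoK2_join_simple : simple_graph twoK2_join.
Proof.
split; first by move=> i; rewrite /twoK2_join eqxx.
by move=> i j; case_I8 i; case_I8 j.
Qed.

Lemma twoK2_join_not_PCG : ~ PCG twoK2_join.
Proof.
pose o (k : nat) (lt_k8 : (k < 8)%N) := Ordinal lt_k8.
apply: (@joined_2K2_not_PCG _ _ (o 0 isT) (o 1 isT) (o 2 isT) (o 3 isT)
                                 (o 4 isT) (o 5 isT) (o 6 isT) (o 7 isT)) => //.
- exact: twoK2_join_simple.1.
- move=> i j; rewrite !inE.
  by case/or4P=> /eqP->; case/or4P=> /eqP->.
Qed.

Theorem corollary2 :
  (exists (V : finType) (E : rel V),
      simple_graph E /\ trapezoid_graph E /\ ~ PCG E) /\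
  (exists (V : finType) (E : rel V),
      simple_graph E /\ permutation_graph E /\ ~ PCG E).
Proof.
split; exists 'I_8, twoK2_join;
  (split; [exact: twoK2_join_simple | split; last exact: twoK2_join_not_PCG]).
- exact: trapezoid_graph_inversions (@ord_inj 8) twoK2_join_perm_inj twoK2_join_inversions.
- exact: permutation_graph_inversions (@ord_inj 8) twoK2_join_perm_inj twoK2_join_inversions.
Qed.
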